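(* Let $\sigma$ be a strongly erasing $k$-block substitution with $w_\epsilon\ne1^k$ that satisfies the optimality condition. Then for every $w\in\{0,1\}^*$ there is $h\in\mathbb N$ such that $f_\sigma^h([w])=\mathbb I$. Consequently $f_\sigma$ is topologically mixing: for all nonempty open sets $A,B\subseteq\mathbb I$ there is $N$ such that $f_\sigma^n(A)\cap B\ne\emptyset$ for all $n\ge N$.
   Context: Notation: $\mathbb I=[0,1]$. $\{0,1\}^*$ and $\{0,1\}^\omega$ denote finite and infinite binary words, and $\epsilon$ is the empty word. For a word $w$, set $0.w=\sum_iw_i2^{-i}$. For $x\in(0,1]$, $\widetilde x$ is the unique infinite binary expansion of $x$ not ending in $0^\infty$. For $w\in\{0,1\}^*$, the cylinder is $[w]=\{x\in\mathbb I:x=0.wv\text{ for some finite or infinite word }v\}$. Fix $k\ge2$. An erasing $k$-block substitution is a map $\sigma:\{0,1\}^k\to\{0,1\}^*$ with exactly one block $w_\epsilon$ such that $\sigma(w_\epsilon)=\epsilon$. It acts blockwise on infinite words and on finite words of length a multiple of $k$. $k$-rounding: a $k$-rounding of $w$ is any word $wv$ whose length is the least multiple of $k$ that is $\ge|w|$; if $|w|$ is a multiple of $k$, the only $k$-rounding of $w$ is $w$. $\sigma$ is strongly erasing if for every $w\in\{0,1\}^*$ there exist $n\in\mathbb N$ and words $r_0,\dots,r_{n-1}$ such that $r_0$ is a $k$-rounding of $w$, $r_j$ is a $k$-rounding of $\sigma(r_{j-1})$ for $1\le j\le n-1$, and $\sigma(r_{n-1})=\epsilon$. The map $f_\sigma:\mathbb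 I\to\mathbb I$ is defined by $f_\sigma(x)=0.\sigma(\widetilde x)$ if $x\in(0,1]$ and $\widetilde x\neq w_\epsilon^\infty$, and $f_\sigma(x)=0$ otherwise. Optimality condition: every $w\in\{0,1\}^\omega$ can be written as $w=\prod_{i\ge1}\sigma(b_i)$ with blocks $b_i\in\{0,1\}^k$ satisfying $\sigma(b_i)\ne\epsilon$. *)

From Stdlib Require Import Reals Lra Lia List Arith ClassicalEpsilon.
From Coquelicot Require Import Coquelicot.
Import ListNotations.
Open Scope R_scope.

(* Finite binary words: list bool;  infinite binary words: nat -> bool,
   where index i stands for the letter w_{i+1}. *)

Fixpoint val_fin_from (n : nat) (w : list bool) : R :=
  match w with
  | [] => 0
  | b :: w' => (if b then (/2) ^ (S n) else 0) + val_fin_from (S n) w'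
  end.
Definition val_fin (w : list bool) : R := val_fin_from 0 w.

Definition val_inf (w : nat -> bool) : R :=
  Series (fun i => if w i then (/2) ^ (S i) else 0).

Definition app_inf (u : list bool) (v : nat -> bool) : nat -> bool :=
  fun i => if Nat.ltb i (length u) then nth i u false else v (i - length u)%nat.

Definition is_tilde_expansion (x : R) (w : nat -> bool) : Prop :=
  x = val_inf w /\ (forall N : nat, exists i : nat, (N <= i)%nat /\ w i = true).

(* x~ : the (unique, for x in (0,1]) infinite binary expansion of x not
   ending in 0^oo; chosen by Hilbert's epsilon. *)
Definition tilde (x : R) : nat -> bool :=
  epsilon (inhabits (fun _ => true)) (is_tilde_expansion x).

Definition block (k : nat) (w : nat -> bool) (j : nat) : list bool :=
  map (fun t => w (k * j + t)%nat) (seq 0 k).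

Definition erasing (k : nat) (sigma : list bool -> list bool) (weps : list bool) : Prop :=
  length weps = k /\ sigma weps = [] /\
  (forall b, length b = k -> sigma b = [] -> b = weps).

Fixpoint chunks_aux (fuel k : nat) (w : list bool) : list (list bool) :=
  match fuel with
  | O => []
  | S f => match w with
           | [] => []
           | _ => firstn k w :: chunks_aux f k (skipn k w)
           end
  end.
Definition chunks (k : nat) (w : list bool) := chunks_aux (length w) k w.

(* blockwise action on finite words (of length a multiple of k) *)
Definition sigma_fin (k : nat) (sigma : list bool -> list bool) (w : list bool) : list bool :=
  concat (map sigma (chunks k w)).

Definition k_rounding (k : nat) (w r : list bool) : Prop :=
  (exists v, r = w ++ v) /\ Nat.divide k (length r) /\ (length w <= length r)%nat /\
  (forall m, Nat.divide k m -> (length w <= m)%nat -> (length r <= m)%nat).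

Definition strongly_erasing (k : nat) (sigma : list bool -> list bool) : Prop :=
  forall w : list bool, exists (n : nat) (r : nat -> list bool),
    (1 <= n)%nat /\ k_rounding k w (r 0%nat) /\
    (forall j, (1 <= j <= n - 1)%nat -> k_rounding k (sigma_fin k sigma (r (j - 1)%nat)) (r j)) /\
    sigma_fin k sigma (r (n - 1)%nat) = [].

Fixpoint pref_len (sigma : list bool -> list bool) (b : nat -> list bool) (j : nat) : nat :=
  match j with
  | O => O
  | S j' => (pref_len sigma b j' + length (sigma (b j')))%nat
  end.

Definition val_concat (sigma : list bool -> list bool) (b : nat -> list bool) : R :=
  Series (fun j => (/2) ^ (pref_len sigma b j) * val_fin (sigma (b j))).

Definition periodic (k : nat) (u : list bool) : nat -> bool :=
  fun i => nth (i mod k) u false.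

Definition f_sigma (k : nat) (sigma : list bool -> list bool) (weps : list bool) (x : R) : R :=
  if excluded_middle_informative (0 < x <= 1 /\ tilde x <> periodic k weps)
  then val_concat sigma (block k (tilde x))
  else 0.

Definition optimal (k : nat) (sigma : list bool -> list bool) : Prop :=
  forall w : nat -> bool, exists b : nat -> list bool,
    (forall i, length (b i) = k /\ sigma (b i) <> []) /\
    (forall j m, (m < length (sigma (b j)))%nat ->
       w (pref_len sigma b j + m)%nat = nth m (sigma (b j)) false).

Definition cylinder (w : list bool) (x : R) : Prop :=
  0 <= x <= 1 /\
  ((exists v : list bool, x = val_fin (w ++ v)) \/
   (exists v : nat -> bool, x = val_inf (app_inf w v))).

Definition unit_interval (x : R) : Prop := 0 <= x <= 1.

Fixpoint iter (n : nat) (f : R -> R) (x : R) : R :=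
  match n with O => x | S n' => f (iter n' f x) end.

Definition image_iter (n : nat) (f : R -> R) (A : R -> Prop) : R -> Prop :=
  fun y => exists x, A x /\ iter n f x = y.

Definition open_in_I (A : R -> Prop) : Prop :=
  (forall x, A x -> unit_interval x) /\
  (forall x, A x -> exists eps, 0 < eps /\
     forall y, unit_interval y -> Rabs (y - x) < eps -> A y).

Definition topologically_mixing (f : R -> R) : Prop :=
  forall A B : R -> Prop, open_in_I A -> open_in_I B ->
    (exists a, A a) -> (exists b, B b) ->
    exists N : nat, forall n : nat, (N <= n)%nat ->
      exists x, A x /\ B (iter n f x).

(* The heart of the proof is a preimage construction.  Let r be a word whose
   length is a multiple of k and R any infinite word.  Optimality writes R as
   sigma(b_0) sigma(b_1) ... with no erased block; interleaving these blocks
   with copies of the erased block w_eps gives a continuation C such that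
   r C has infinitely many ones, is not w_eps^oo, and satisfies
   sigma(r C) = sigma(r) R.  Hence f_sigma(0.rC) = 0.sigma(r)R: every point
   of the form 0.sigma(r)R has a preimage in the cylinder [r].

   Iterating this along the chain of k-roundings r_0, ..., r_{n-1} provided
   by strong erasure, whose last image sigma(r_{n-1}) is empty, shows that
   f_sigma^n maps the cylinder [w] onto the whole interval I (first claim).
   Taking r empty shows that f_sigma maps I onto I.  Since every nonempty
   open subset of I contains a cylinder, f^N(A) = I for some N, hence
   f^n(A) = f^(n-N)(f^N(A)) = I meets B for all n >= N (second claim). *)

From Stdlib Require Import Reals Lra Lia List ClassicalEpsilon FunctionalExtensionality.
From Coquelicot Require Import Coquelicot.
Import ListNotations.
Open Scope R_scope.

Fixpoint psum (a : nat -> R) (n : nat) : R :=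
  match n with O => 0 | S n' => psum a n' + a n' end.

Lemma sum_n_psum a n : sum_n a n = psum a (S n).
Proof.
  induction n as [|n IH].
  - rewrite sum_O. simpl. now rewrite Rplus_0_l.
  - rewrite sum_Sn, IH. reflexivity.
Qed.

Lemma psum_mono a n m : (forall i, 0 <= a i) -> (n <= m)%nat -> psum a n <= psum a m.
Proof. intros Ha H. induction H as [|m _ IH]; simpl; [lra|]. specialize (Ha m). lra. Qed.

Lemma series_nonneg_bounded a M : (forall n, 0 <= a n) -> (forall n, psum a n <= M) ->
  ex_series a /\ (forall n, psum a n <= Series a) /\ Series a <= M.
Proof.
  intros Ha HM.
  assert (Hlim : ex_finite_lim_seq (sum_n a)).
  { apply ex_finite_lim_seq_incr with M; intros n; rewrite !sum_n_psum.
    - simpl. specialize (Ha (S n)). lra.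
    - apply HM. }
  destruct Hlim as [l Hl].
  assert (HS : Series a = l) by (unfold Series; rewrite (is_lim_seq_unique _ _ Hl); reflexivity).
  rewrite HS. split; [exists l; exact Hl|]. split.
  - intros n. apply (is_lim_seq_incr_n _ n) in Hl.
    apply (is_lim_seq_le (fun _ => psum a n) (fun m => sum_n a (m + n)) (psum a n) l);
      [|apply is_lim_seq_const|exact Hl].
    intros m. rewrite sum_n_psum. apply psum_mono; [exact Ha|lia].
  - apply (is_lim_seq_le (sum_n a) (fun _ => M) l M); [|exact Hl|apply is_lim_seq_const].
    intros m. rewrite sum_n_psum. apply HM.
Qed.

Lemma half_pow_pos n : 0 < (/2)^n.
Proof. apply pow_lt; lra. Qed.

Lemma half_pow_small eps : 0 < eps -> exists L, (/2)^L < eps.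
Proof.
  intros He. destruct (pow_lt_1_zero (/2)) with eps as [N HN]; [rewrite Rabs_pos_eq; lra|exact He|].
  exists N. specialize (HN N (le_n _)). rewrite Rabs_pos_eq in HN; [exact HN|].
  apply pow_le; lra.
Qed.

Lemma nonpos_of_le_half_pow z : (forall L, z <= (/2)^L) -> z <= 0.
Proof.
  intros H. destruct (Rle_dec z 0) as [Hz|Hz]; [exact Hz|].
  destruct (half_pow_small z) as [L HL]; [lra|]. specialize (H L). lra.
Qed.

Lemma half_pow_scaled_bounds L t : 0 <= t <= 1 -> 0 <= (/2)^L * t <= (/2)^L.
Proof.
  intros Ht. pose proof (half_pow_pos L). split; [apply Rmult_le_pos; lra|].
  rewrite <- (Rmult_1_r ((/2)^L)) at 2. apply Rmult_le_compat_l; lra.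
Qed.

Lemma val_fin_from_S m u : val_fin_from (S m) u = /2 * val_fin_from m u.
Proof.
  revert m. induction u as [|b u IH]; intros m; simpl; [ring|].
  rewrite IH. destruct b; simpl; ring.
Qed.

Lemma val_fin_from_shift m u : val_fin_from m u = (/2)^m * val_fin u.
Proof.
  induction m as [|m IH]; unfold val_fin in *; simpl; [ring|].
  rewrite val_fin_from_S, IH. ring.
Qed.

Lemma val_fin_from_app m u v :
  val_fin_from m (u ++ v) = val_fin_from m u + val_fin_from (m + length u) v.
Proof.
  revert m. induction u as [|b u IH]; intros m; simpl; [rewrite Nat.add_0_r; ring|].
  rewrite IH. replace (S m + length u)%nat with (m + S (length u))%nat by lia. ring.
Qed.

Lemma val_fin_app u v : val_fin (u ++ v) = val_fin u + (/2)^(length u) * val_fin v.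
Proof.
  unfold val_fin. rewrite val_fin_from_app, (val_fin_from_shift (0 + length u)). reflexivity.
Qed.

Lemma val_fin_cons b u : val_fin (b :: u) = (if b then /2 else 0) + /2 * val_fin u.
Proof. unfold val_fin. simpl. rewrite val_fin_from_S. destruct b; simpl; ring. Qed.

Lemma val_fin_bounds u : 0 <= val_fin u <= 1 - (/2)^(length u).
Proof.
  induction u as [|b u IH]; [unfold val_fin; simpl; lra|].
  rewrite val_fin_cons. simpl. destruct b; lra.
Qed.

Definition digit_term (W : nat -> bool) (i : nat) : R := if W i then (/2)^(S i) else 0.

Lemma digit_term_nonneg W i : 0 <= digit_term W i.
Proof. unfold digit_term. destruct (W i); [left; apply half_pow_pos|lra]. Qed.

Lemma val_fin_from_seq W L s :
  val_fin_from s (map W (seq s L)) + psum (digit_term W) s = psum (digit_term W) (s + L).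
Proof.
  revert s. induction L as [|L IH]; intros s; simpl; [rewrite Nat.add_0_r; ring|].
  replace (s + S L)%nat with (S s + L)%nat by lia. rewrite <- IH. simpl.
  unfold digit_term. destruct (W s); simpl; ring.
Qed.

Lemma val_fin_prefix W L : val_fin (map W (seq 0 L)) = psum (digit_term W) L.
Proof. unfold val_fin. pose proof (val_fin_from_seq W L 0) as H. simpl in H. lra. Qed.

Lemma psum_digit_term_le_1 W n : psum (digit_term W) n <= 1.
Proof.
  rewrite <- val_fin_prefix. pose proof (val_fin_bounds (map W (seq 0 n))).
  pose proof (half_pow_pos (length (map W (seq 0 n)))). lra.
Qed.

Lemma val_inf_series W :
  ex_series (digit_term W) /\ (forall n, psum (digit_term W) n <= val_inf W) /\ val_inf W <= 1.
Proof.
  apply series_nonneg_bounded; [apply digit_term_nonneg|apply psum_digit_term_le_1].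
Qed.

Lemma val_inf_bounds W : 0 <= val_inf W <= 1.
Proof. destruct (val_inf_series W) as [_ [Hlow Hup]]. specialize (Hlow O). simpl in Hlow. lra. Qed.

Lemma val_inf_ext W1 W2 : (forall i, W1 i = W2 i) -> val_inf W1 = val_inf W2.
Proof. intros H. unfold val_inf. apply Series_ext. intros n. rewrite H. reflexivity. Qed.

Lemma val_inf_cons W :
  val_inf W = (if W O then /2 else 0) + /2 * val_inf (fun i => W (S i)).
Proof.
  unfold val_inf. fold (digit_term W). fold (digit_term (fun i => W (S i))).
  rewrite Series_incr_1 by apply (proj1 (val_inf_series W)). rewrite <- Series_scal_l.
  f_equal; [unfold digit_term; simpl; destruct (W O); simpl; ring|].
  apply Series_ext. intros n. unfold digit_term. destruct (W (S n)); simpl; ring.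
Qed.

Lemma app_inf_nil W : app_inf [] W = W.
Proof. apply functional_extensionality. intros i. unfold app_inf. simpl. f_equal. lia. Qed.

Lemma app_inf_app u v W : app_inf (u ++ v) W = app_inf u (app_inf v W).
Proof.
  apply functional_extensionality. intros i. unfold app_inf. rewrite length_app.
  destruct (Nat.ltb_spec i (length u)).
  - destruct (Nat.ltb_spec i (length u + length v)); [apply app_nth1; exact H|lia].
  - destruct (Nat.ltb_spec (i - length u) (length v));
      destruct (Nat.ltb_spec i (length u + length v)); try lia.
    + apply app_nth2. exact H.
    + f_equal. lia.
Qed.

Lemma val_inf_app u v : val_inf (app_inf u v) = val_fin u + (/2)^(length u) * val_inf v.
Proof.
  induction u as [|b u IH].
  - rewrite app_inf_nil. unfold val_fin. simpl. ring.
  - rewrite val_inf_cons, val_fin_cons.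
    rewrite (val_inf_ext (fun i => app_inf (b :: u) v (S i)) (app_inf u v)) by reflexivity.
    rewrite IH. unfold app_inf at 1. simpl. ring.
Qed.

Lemma app_inf_prefix_tail W L : app_inf (map W (seq 0 L)) (fun i => W (L + i)%nat) = W.
Proof.
  apply functional_extensionality. intros i. unfold app_inf. rewrite length_map, length_seq.
  destruct (Nat.ltb_spec i L).
  - rewrite (nth_indep _ false (W 0%nat)) by (rewrite length_map, length_seq; lia).
    rewrite map_nth, seq_nth by lia. reflexivity.
  - f_equal. lia.
Qed.

Lemma val_inf_split W L :
  val_inf W = psum (digit_term W) L + (/2)^L * val_inf (fun i => W (L + i)%nat).
Proof.
  rewrite <- (app_inf_prefix_tail W L) at 1.
  rewrite val_inf_app, val_fin_prefix, length_map, length_seq. reflexivity.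
Qed.

Definition inf_ones (W : nat -> bool) : Prop :=
  forall N, exists i, (N <= i)%nat /\ W i = true.

Lemma inf_ones_tail W : inf_ones W -> inf_ones (fun i => W (S i)).
Proof.
  intros H N. destruct (H (S N)) as [[|i] [Hi Hw]]; [lia|]. exists i. split; [lia|exact Hw].
Qed.

Lemma inf_ones_app r C : inf_ones C -> inf_ones (app_inf r C).
Proof.
  intros H N. destruct (H N) as [i [Hi Hc]]. exists (length r + i)%nat. split; [lia|].
  unfold app_inf. destruct (Nat.ltb_spec (length r + i) (length r)); [lia|].
  rewrite <- Hc. f_equal. lia.
Qed.

Lemma val_inf_pos i : forall W, W i = true -> 0 < val_inf W.
Proof.
  induction i as [|i IH]; intros W H; rewrite val_inf_cons;
    pose proof (val_inf_bounds (fun j => W (S j))).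
  - rewrite H. lra.
  - specialize (IH (fun j => W (S j)) H). destruct (W O); lra.
Qed.

Lemma inf_ones_same_head W1 W2 :
  inf_ones W1 -> inf_ones W2 -> val_inf W1 = val_inf W2 -> W1 O = W2 O.
Proof.
  assert (Hone_zero : forall A B, inf_ones A -> A O = true -> B O = false ->
            val_inf A <> val_inf B).
  { intros A B HA Ha Hb HE. rewrite (val_inf_cons A), (val_inf_cons B), Ha, Hb in HE.
    destruct (inf_ones_tail _ HA O) as [j [_ Hj]].
    pose proof (val_inf_pos j (fun i => A (S i)) Hj).
    pose proof (val_inf_bounds (fun i => B (S i))). lra. }
  intros H1 H2 He. destruct (W1 O) eqn:E1, (W2 O) eqn:E2; auto.
  - exfalso. exact (Hone_zero W1 W2 H1 E1 E2 He).
  - exfalso. exact (Hone_zero W2 W1 H2 E2 E1 (eq_sym He)).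
Qed.

Lemma inf_ones_expansion_unique i : forall W1 W2,
  inf_ones W1 -> inf_ones W2 -> val_inf W1 = val_inf W2 -> W1 i = W2 i.
Proof.
  induction i as [|i IH]; intros W1 W2 H1 H2 He; [apply inf_ones_same_head; auto|].
  apply (IH (fun j => W1 (S j)) (fun j => W2 (S j))); try apply inf_ones_tail; auto.
  pose proof (inf_ones_same_head _ _ H1 H2 He) as H0.
  rewrite val_inf_cons, (val_inf_cons W2), H0 in He. lra.
Qed.

Lemma tilde_val_inf W : inf_ones W -> tilde (val_inf W) = W.
Proof.
  intros H. unfold tilde.
  destruct (epsilon_spec (inhabits (fun _ => true)) (is_tilde_expansion (val_inf W)))
    as [Hv Ho]; [exists W; split; [reflexivity|exact H]|].
  apply functional_extensionality. intros i. apply inf_ones_expansion_unique; auto.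
Qed.

(* Existence of a binary expansion of every y in [0,1], by the greedy
   algorithm: [greedy_sum y n] is the largest dyadic of the form
   0.d_1...d_n not exceeding y, and [greedy_digit y] its digits. *)
Fixpoint greedy_sum (y : R) (n : nat) : R :=
  match n with
  | O => 0
  | S n' => if Rle_dec (greedy_sum y n' + (/2)^(S n')) y
            then greedy_sum y n' + (/2)^(S n') else greedy_sum y n'
  end.

Definition greedy_digit (y : R) (i : nat) : bool :=
  if Rle_dec (greedy_sum y i + (/2)^(S i)) y then true else false.

Lemma psum_greedy_digit y n : psum (digit_term (greedy_digit y)) n = greedy_sum y n.
Proof.
  induction n as [|n IH]; simpl; [reflexivity|]. rewrite IH. unfold digit_term, greedy_digit.
  change ((/2)^(S n)) with (/2 * (/2)^n).
  destruct (Rle_dec (greedy_sum y n + /2 * (/2)^n) y); simpl; ring.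
Qed.

Lemma greedy_sum_bounds y n : 0 <= y <= 1 -> greedy_sum y n <= y <= greedy_sum y n + (/2)^n.
Proof.
  intros Hy. induction n as [|n IH]; simpl; [lra|].
  destruct (Rle_dec (greedy_sum y n + / 2 * (/ 2) ^ n) y); lra.
Qed.

Lemma binary_expansion y : 0 <= y <= 1 -> exists U, val_inf U = y.
Proof.
  intros Hy. exists (greedy_digit y).
  assert (Hclose : forall L, Rabs (val_inf (greedy_digit y) - y) <= (/2)^L).
  { intros L. pose proof (proj1 (proj2 (val_inf_series (greedy_digit y))) L) as Hp.
    pose proof (val_inf_split (greedy_digit y) L) as Hs.
    rewrite psum_greedy_digit in Hp, Hs.
    pose proof (half_pow_scaled_bounds L _ (val_inf_bounds (fun i => greedy_digit y (L + i)%nat))).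
    pose proof (greedy_sum_bounds y L Hy). apply Rabs_le. lra. }
  assert (Rabs (val_inf (greedy_digit y) - y) <= 0) by (apply nonpos_of_le_half_pow; exact Hclose).
  pose proof (Rabs_pos (val_inf (greedy_digit y) - y)).
  apply Rminus_diag_uniq, Rabs_eq_0. lra.
Qed.

Definition concat_term (sigma : list bool -> list bool) (b : nat -> list bool) (j : nat) : R :=
  (/2)^(pref_len sigma b j) * val_fin (sigma (b j)).

Definition concat_prefix (sigma : list bool -> list bool) (b : nat -> list bool) (J : nat)
  : list bool := concat (map (fun j => sigma (b j)) (seq 0 J)).

Lemma concat_prefix_succ sigma b J :
  concat_prefix sigma b (S J) = concat_prefix sigma b J ++ sigma (b J).
Proof.
  unfold concat_prefix. rewrite seq_S, map_app, concat_app. simpl. rewrite app_nil_r. reflexivity.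
Qed.

Lemma length_concat_prefix sigma b J : length (concat_prefix sigma b J) = pref_len sigma b J.
Proof.
  induction J as [|J IH]; [reflexivity|].
  rewrite concat_prefix_succ, length_app, IH. reflexivity.
Qed.

Lemma psum_concat_term sigma b J : psum (concat_term sigma b) J = val_fin (concat_prefix sigma b J).
Proof.
  induction J as [|J IH]; [reflexivity|]. simpl. rewrite IH, concat_prefix_succ, val_fin_app.
  rewrite length_concat_prefix. reflexivity.
Qed.

Lemma concat_term_nonneg sigma b j : 0 <= concat_term sigma b j.
Proof.
  unfold concat_term. apply Rmult_le_pos; [left; apply half_pow_pos|apply val_fin_bounds].
Qed.

Lemma val_concat_series sigma b M : (forall J, psum (concat_term sigma b) J <= M) ->
  (forall J, psum (concat_term sigma b) J <= val_concat sigma b) /\ val_concat sigma b <= M.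
Proof.
  intros HM. destruct (series_nonneg_bounded (concat_term sigma b) M) as [_ H];
    [apply concat_term_nonneg|exact HM|exact H].
Qed.

Lemma val_concat_bounds sigma b : 0 <= val_concat sigma b <= 1.
Proof.
  destruct (val_concat_series sigma b 1) as [H1 H2].
  - intros n. rewrite psum_concat_term. pose proof (val_fin_bounds (concat_prefix sigma b n)).
    pose proof (half_pow_pos (length (concat_prefix sigma b n))). lra.
  - specialize (H1 O). simpl in H1. lra.
Qed.

(* [spells sigma b T]: the infinite word T is the concatenation
   sigma(b_0) sigma(b_1) ..., and this concatenation is infinite. *)
Definition spells (sigma : list bool -> list bool) (b : nat -> list bool) (T : nat -> bool)
  : Prop :=
  (forall j m, (m < length (sigma (b j)))%nat ->
     T (pref_len sigma b j + m)%nat = nth m (sigma (b j)) false) /\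
  (forall N, exists j, (N <= pref_len sigma b j)%nat).

Lemma map_seq_nth (T : nat -> bool) P l :
  (forall m, (m < length l)%nat -> T (P + m)%nat = nth m l false) ->
  map T (seq P (length l)) = l.
Proof.
  intros H. apply nth_ext with false false; rewrite length_map, length_seq; [reflexivity|].
  intros n Hn. rewrite (nth_indep _ false (T 0%nat)) by (rewrite length_map, length_seq; lia).
  rewrite map_nth, seq_nth by lia. apply H. exact Hn.
Qed.

Lemma concat_prefix_spelled sigma b T : spells sigma b T ->
  forall J, concat_prefix sigma b J = map T (seq 0 (pref_len sigma b J)).
Proof.
  intros [Hm _] J. induction J as [|J IH]; [reflexivity|].
  rewrite concat_prefix_succ, IH. simpl pref_len. rewrite seq_app, map_app. simpl. f_equal.
  symmetry. apply map_seq_nth. intros m Hm'. apply Hm. exact Hm'.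
Qed.

Lemma val_concat_spells sigma b T : spells sigma b T -> val_concat sigma b = val_inf T.
Proof.
  intros HR.
  assert (Hps : forall J, psum (concat_term sigma b) J = psum (digit_term T) (pref_len sigma b J)).
  { intros J. rewrite psum_concat_term, (concat_prefix_spelled _ _ _ HR), val_fin_prefix.
    reflexivity. }
  destruct (val_concat_series sigma b (val_inf T)) as [Hlow Hup].
  { intros n. rewrite Hps. apply (val_inf_series T). }
  assert (val_inf T - val_concat sigma b <= 0); [|lra].
  apply nonpos_of_le_half_pow. intros L.
  destruct (proj2 HR L) as [J HJ].
  pose proof (val_inf_split T L).
  pose proof (half_pow_scaled_bounds L _ (val_inf_bounds (fun i => T (L + i)%nat))).
  pose proof (psum_mono (digit_term T) _ _ (digit_term_nonneg T) HJ).
  specialize (Hlow J). rewrite Hps in Hlow. lra.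
Qed.

Definition bcons (a : list bool) (b : nat -> list bool) : nat -> list bool :=
  fun j => match j with O => a | S j' => b j' end.

Lemma pref_len_bcons sigma a b j :
  pref_len sigma (bcons a b) (S j) = (length (sigma a) + pref_len sigma b j)%nat.
Proof. induction j as [|j IH]; simpl in *; lia. Qed.

Lemma spells_bcons sigma a b T :
  spells sigma b T -> spells sigma (bcons a b) (app_inf (sigma a) T).
Proof.
  intros [Hm Hu]. split.
  - intros [|j] m Hlt; unfold app_inf.
    + simpl in *. destruct (Nat.ltb_spec m (length (sigma a))); [reflexivity|lia].
    + rewrite pref_len_bcons. simpl bcons in *.
      destruct (Nat.ltb_spec (length (sigma a) + pref_len sigma b j + m) (length (sigma a)));
        [lia|].
      rewrite <- Hm by exact Hlt. f_equal. lia.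
  - intros N. destruct (Hu N) as [j Hj]. exists (S j). rewrite pref_len_bcons. lia.
Qed.

Lemma map_nth_seq (l : list bool) k : length l = k -> map (fun t => nth t l false) (seq 0 k) = l.
Proof.
  intros H. subst k. apply map_seq_nth. intros m _. reflexivity.
Qed.

Lemma div_mod_block k j t : (t < k)%nat -> ((k * j + t) / k = j /\ (k * j + t) mod k = t)%nat.
Proof.
  intros H. split; symmetry; [apply Nat.div_unique with t|apply Nat.mod_unique with j]; lia.
Qed.

Lemma block_app k a W : length a = k -> block k (app_inf a W) = bcons a (block k W).
Proof.
  intros Ha. apply functional_extensionality. intros [|j]; unfold block; simpl.
  - rewrite <- (map_nth_seq a k Ha) at 1. apply map_ext_in. intros t Ht.
    apply in_seq in Ht. unfold app_inf. rewrite Nat.mul_0_r. simpl.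
    destruct (Nat.ltb_spec t (length a)); [reflexivity|lia].
  - apply map_ext_in. intros t Ht. apply in_seq in Ht. unfold app_inf.
    destruct (Nat.ltb_spec (k * S j + t) (length a)); [nia|]. f_equal. nia.
Qed.

Lemma chunks_aux_fuel k : (1 <= k)%nat -> forall f1 f2 w,
  (length w <= f1)%nat -> (length w <= f2)%nat -> chunks_aux f1 k w = chunks_aux f2 k w.
Proof.
  intros Hk f1. induction f1 as [|f1 IH]; intros f2 w H1 H2.
  - destruct w; simpl in *; [destruct f2; reflexivity|lia].
  - destruct w as [|x w']; [destruct f2; reflexivity|].
    destruct f2 as [|f2]; simpl in *; [lia|]. f_equal.
    apply IH; rewrite length_skipn; simpl length in *; lia.
Qed.

Lemma sigma_fin_app k sigma a r : (1 <= k)%nat -> length a = k ->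
  sigma_fin k sigma (a ++ r) = sigma a ++ sigma_fin k sigma r.
Proof.
  intros Hk Ha. unfold sigma_fin, chunks.
  assert (Hfirst : chunks_aux (length (a ++ r)) k (a ++ r) =
     firstn k (a ++ r) :: chunks_aux (length (a ++ r) - 1) k (skipn k (a ++ r))).
  { destruct a as [|x a']; [simpl in Ha; lia|]. simpl. rewrite Nat.sub_0_r. reflexivity. }
  rewrite Hfirst, firstn_app, skipn_app, firstn_all2, skipn_all2 by lia.
  rewrite Ha, Nat.sub_diag. simpl. rewrite app_nil_r. do 3 f_equal.
  apply chunks_aux_fuel; [lia|rewrite length_app; lia|lia].
Qed.

Lemma spells_prefix k sigma : (1 <= k)%nat -> forall L r W T, length r = (k * L)%nat ->
  spells sigma (block k W) T ->
  spells sigma (block k (app_inf r W)) (app_inf (sigma_fin k sigma r) T).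
Proof.
  intros Hk L. induction L as [|L IH]; intros r W T Hr HR.
  - rewrite Nat.mul_0_r in Hr. destruct r; [|simpl in Hr; lia].
    rewrite !app_inf_nil. exact HR.
  - rewrite <- (firstn_skipn k r).
    assert (Ha : length (firstn k r) = k) by (rewrite length_firstn; lia).
    assert (Hr' : length (skipn k r) = (k * L)%nat) by (rewrite length_skipn; lia).
    rewrite sigma_fin_app, !app_inf_app, block_app by assumption.
    apply spells_bcons, IH; assumption.
Qed.

Definition flatten k (B : nat -> list bool) : nat -> bool :=
  fun i => nth (i mod k)%nat (B (i / k)%nat) false.

Lemma block_flatten k B : (forall j, length (B j) = k) -> forall j, block k (flatten k B) j = B j.
Proof.
  intros HB j. unfold block, flatten. rewrite <- (map_nth_seq (B j) k (HB j)) at 1.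
  apply map_ext_in. intros t Ht. apply in_seq in Ht.
  destruct (div_mod_block k j t) as [E1 E2]; [lia|]. rewrite E1, E2. reflexivity.
Qed.

Lemma nth_flatten k B j t : (t < k)%nat -> flatten k B (k * j + t)%nat = nth t (B j) false.
Proof.
  intros Ht. unfold flatten. destruct (div_mod_block k j t Ht) as [E1 E2]. rewrite E1, E2.
  reflexivity.
Qed.

Lemma block_periodic k weps j : length weps = k -> (1 <= k)%nat ->
  block k (periodic k weps) j = weps.
Proof.
  intros Hl Hk. unfold block, periodic. rewrite <- (map_nth_seq weps k Hl) at 1.
  apply map_ext_in. intros t Ht. apply in_seq in Ht.
  destruct (div_mod_block k j t) as [_ E2]; [lia|]. rewrite E2. reflexivity.
Qed.

(* Interleaving b_0 w_eps b_1 w_eps ...: the erased blocks do not change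
   the spelled word, but they guarantee infinitely many ones. *)
Definition interleave (b : nat -> list bool) (weps : list bool) : nat -> list bool :=
  fun j => if Nat.even j then b (Nat.div2 j) else weps.

Lemma interleave_even b weps j : interleave b weps (2 * j) = b j.
Proof. unfold interleave. rewrite Nat.even_even, Nat.div2_double. reflexivity. Qed.

Lemma interleave_odd b weps j : interleave b weps (2 * j + 1) = weps.
Proof. unfold interleave. rewrite Nat.even_odd. reflexivity. Qed.

Lemma pref_len_succ sigma b j :
  pref_len sigma b (S j) = (pref_len sigma b j + length (sigma (b j)))%nat.
Proof. reflexivity. Qed.

Lemma pref_len_interleave sigma b weps : sigma weps = [] -> forall j,
  pref_len sigma (interleave b weps) (2 * j) = pref_len sigma b j /\
  pref_len sigma (interleave b weps) (2 * j + 1) = pref_len sigma b (S j).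
Proof.
  intros Hw j. induction j as [|j [IH1 IH2]]; [split; reflexivity|].
  assert (E : pref_len sigma (interleave b weps) (2 * S j) = pref_len sigma b (S j)).
  { replace (2 * S j)%nat with (S (2 * j + 1)) by lia.
    rewrite pref_len_succ, IH2, interleave_odd, Hw. simpl. lia. }
  split; [exact E|].
  replace (2 * S j + 1)%nat with (S (2 * S j)) by lia.
  rewrite pref_len_succ, E, interleave_even. reflexivity.
Qed.

Lemma pref_len_nonerasing sigma b : (forall i, sigma (b i) <> []) ->
  forall j, (j <= pref_len sigma b j)%nat.
Proof.
  intros H j. induction j as [|j IH]; simpl; [lia|].
  specialize (H j). destruct (sigma (b j)); [congruence|simpl; lia].
Qed.

Lemma spells_interleave sigma b weps T : sigma weps = [] -> (forall i, sigma (b i) <> []) ->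
  (forall j m, (m < length (sigma (b j)))%nat ->
     T (pref_len sigma b j + m)%nat = nth m (sigma (b j)) false) ->
  spells sigma (interleave b weps) T.
Proof.
  intros Hw Hne Hm. split.
  - intros i m Hlt. destruct (Nat.Even_or_Odd i) as [[j ->]|[j ->]].
    + rewrite (proj1 (pref_len_interleave sigma b weps Hw j)).
      rewrite interleave_even in *. apply Hm. exact Hlt.
    + rewrite interleave_odd, Hw in Hlt. simpl in Hlt. lia.
  - intros N. exists (2 * N)%nat. rewrite (proj1 (pref_len_interleave sigma b weps Hw N)).
    apply pref_len_nonerasing. exact Hne.
Qed.

Lemma repeat_false_of_nth (l : list bool) k : length l = k ->
  (forall m, (m < k)%nat -> nth m l false = false) -> l = repeat false k.
Proof.
  intros H Hf. apply nth_ext with false false; [rewrite repeat_length; exact H|].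
  intros n Hn. rewrite nth_repeat. apply Hf. lia.
Qed.

Lemma distinct_blocks_one (a c : list bool) k : length a = k -> length c = k -> a <> c ->
  exists m, (m < k)%nat /\ (nth m a false = true \/ nth m c false = true).
Proof.
  intros Ha Hc Hne. apply NNPP. intros Hn. apply Hne.
  rewrite (repeat_false_of_nth a k Ha), (repeat_false_of_nth c k Hc); [reflexivity| |];
    intros m Hm; apply Bool.not_true_is_false; intros E; apply Hn; eauto.
Qed.

Lemma flatten_interleave_inf_ones k (sigma : list bool -> list bool) weps b :
  length weps = k -> sigma weps = [] ->
  (forall i, length (b i) = k /\ sigma (b i) <> []) ->
  inf_ones (flatten k (interleave b weps)).
Proof.
  intros Hwl Hw Hb N.
  assert (Hne : b N <> weps) by (intros E; apply (proj2 (Hb N)); rewrite E; exact Hw).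
  destruct (distinct_blocks_one (b N) weps k (proj1 (Hb N)) Hwl Hne) as [m [Hmk [H1|H1]]].
  - exists (k * (2 * N) + m)%nat. split; [nia|].
    rewrite nth_flatten, interleave_even by exact Hmk. exact H1.
  - exists (k * (2 * N + 1) + m)%nat. split; [nia|].
    rewrite nth_flatten, interleave_odd by exact Hmk. exact H1.
Qed.

Lemma block_preimage k sigma weps : (2 <= k)%nat -> erasing k sigma weps -> optimal k sigma ->
  forall r R, Nat.divide k (length r) ->
  exists C, inf_ones (app_inf r C) /\
    spells sigma (block k (app_inf r C)) (app_inf (sigma_fin k sigma r) R).
Proof.
  intros Hk [Hwl [Hw _]] Hopt r R [z Hz].
  destruct (Hopt R) as [b [Hb Hm]].
  assert (HBl : forall j, length (interleave b weps j) = k).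
  { intros j. unfold interleave. destruct (Nat.even j); [apply Hb|exact Hwl]. }
  exists (flatten k (interleave b weps)). split.
  - apply inf_ones_app. apply (flatten_interleave_inf_ones k sigma); assumption.
  - apply spells_prefix with z; [lia|lia|].
    replace (block k (flatten k (interleave b weps))) with (interleave b weps)
      by (symmetry; apply functional_extensionality, block_flatten, HBl).
    apply spells_interleave; auto. intros i. apply Hb.
Qed.

Lemma f_sigma_spells k sigma weps W T : (2 <= k)%nat -> erasing k sigma weps -> inf_ones W ->
  spells sigma (block k W) T -> f_sigma k sigma weps (val_inf W) = val_inf T.
Proof.
  intros Hk [Hwl [Hw _]] Ho HR. unfold f_sigma. rewrite tilde_val_inf by exact Ho.
  destruct (excluded_middle_informative _) as [H|H]; [apply val_concat_spells, HR|].
  exfalso. apply H. split.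
  - destruct (Ho O) as [i [_ Hi]]. split; [exact (val_inf_pos i W Hi)|apply val_inf_bounds].
  - intros E. rewrite E in HR. destruct (proj2 HR 1%nat) as [j Hj].
    assert (pref_len sigma (block k (periodic k weps)) j = 0%nat); [|lia].
    clear Hj. induction j as [|j IH]; [reflexivity|].
    simpl. rewrite IH, block_periodic, Hw by (assumption || lia). reflexivity.
Qed.

Lemma f_sigma_preimage k sigma weps r R : (2 <= k)%nat -> erasing k sigma weps ->
  optimal k sigma -> Nat.divide k (length r) ->
  exists C, f_sigma k sigma weps (val_inf (app_inf r C)) =
            val_inf (app_inf (sigma_fin k sigma r) R).
Proof.
  intros Hk Her Hopt Hr.
  destruct (block_preimage k sigma weps Hk Her Hopt r R Hr) as [C [Ho HR]].
  exists C. apply (f_sigma_spells k sigma weps); assumption.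
Qed.

Lemma iter_add (f : R -> R) a b x : iter (a + b) f x = iter a f (iter b f x).
Proof. induction a as [|a IH]; simpl; [reflexivity|]. rewrite IH. reflexivity. Qed.

Lemma iter_succ (f : R -> R) m x : iter (S m) f x = iter m f (f x).
Proof. replace (S m) with (m + 1)%nat by lia. apply iter_add. Qed.

Lemma f_sigma_unit k sigma weps x : unit_interval (f_sigma k sigma weps x).
Proof.
  unfold f_sigma, unit_interval. destruct (excluded_middle_informative _);
    [apply val_concat_bounds|lra].
Qed.

Lemma iter_f_sigma_unit k sigma weps h x :
  unit_interval x -> unit_interval (iter h (f_sigma k sigma weps) x).
Proof. intros H. destruct h; [exact H|apply f_sigma_unit]. Qed.

(* f_sigma maps I onto I: take r empty in the preimage construction. *)
Lemma f_sigma_onto k sigma weps : (2 <= k)%nat -> erasing k sigma weps -> optimal k sigma ->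
  forall y, unit_interval y -> exists z, unit_interval z /\ f_sigma k sigma weps z = y.
Proof.
  intros Hk Her Hopt y Hy. destruct (binary_expansion y Hy) as [U HU].
  destruct (f_sigma_preimage k sigma weps [] U Hk Her Hopt) as [C HC];
    [apply Nat.divide_0_r|].
  exists (val_inf (app_inf [] C)). split; [apply val_inf_bounds|].
  rewrite HC, <- HU. change (sigma_fin k sigma []) with (@nil bool). now rewrite app_inf_nil.
Qed.

Lemma erasing_chain_covers k sigma weps n (r : nat -> list bool) :
  (2 <= k)%nat -> erasing k sigma weps -> optimal k sigma ->
  (forall j, (j <= n - 1)%nat -> Nat.divide k (length (r j))) ->
  (forall j, (1 <= j <= n - 1)%nat -> exists v, r j = sigma_fin k sigma (r (j - 1)%nat) ++ v) ->
  sigma_fin k sigma (r (n - 1)%nat) = [] ->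
  forall y, unit_interval y -> forall m, (m <= n - 1)%nat ->
  exists C, iter (S m) (f_sigma k sigma weps) (val_inf (app_inf (r (n - 1 - m)%nat) C)) = y.
Proof.
  intros Hk Her Hopt Hdiv Hext Hlast y Hy. destruct (binary_expansion y Hy) as [U HU].
  induction m as [|m IH]; intros Hm.
  - rewrite Nat.sub_0_r.
    destruct (f_sigma_preimage k sigma weps (r (n - 1)%nat) U Hk Her Hopt) as [C HC];
      [apply Hdiv; lia|].
    exists C. simpl. rewrite HC, Hlast, app_inf_nil. exact HU.
  - destruct IH as [C' HC']; [lia|].
    destruct (Hext (n - 1 - m)%nat) as [v Hv]; [lia|].
    replace (n - 1 - m - 1)%nat with (n - 1 - S m)%nat in Hv by lia.
    destruct (f_sigma_preimage k sigma weps (r (n - 1 - S m)%nat) (app_inf v C') Hk Her Hopt)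
      as [C HC]; [apply Hdiv; lia|].
    exists C. rewrite iter_succ, HC, <- app_inf_app, <- Hv. exact HC'.
Qed.

Lemma cylinder_app_inf w C : cylinder w (val_inf (app_inf w C)).
Proof. split; [apply val_inf_bounds|right; exists C; reflexivity]. Qed.

Lemma cylinder_affine w x : cylinder w x ->
  exists t, 0 <= t <= 1 /\ x = val_fin w + (/2)^(length w) * t.
Proof.
  intros [_ [[v Hv]|[v Hv]]].
  - exists (val_fin v). split; [|rewrite Hv, val_fin_app; reflexivity].
    pose proof (val_fin_bounds v). pose proof (half_pow_pos (length v)). lra.
  - exists (val_inf v). split; [apply val_inf_bounds|rewrite Hv, val_inf_app; reflexivity].
Qed.

Lemma image_cylinder_full k sigma weps : (2 <= k)%nat -> erasing k sigma weps ->
  strongly_erasing k sigma -> optimal k sigma ->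
  forall w : list bool, exists h : nat,
    forall y, image_iter h (f_sigma k sigma weps) (cylinder w) y <-> unit_interval y.
Proof.
  intros Hk Her Hse Hopt w. destruct (Hse w) as [n [r [Hn [Hr0 [Hrj Hlast]]]]].
  exists n. intros y. split.
  - intros [x [Hx Hit]]. subst y. apply iter_f_sigma_unit, Hx.
  - intros Hy.
    assert (Hdiv : forall j, (j <= n - 1)%nat -> Nat.divide k (length (r j))).
    { intros [|j] Hj; [apply Hr0|apply (Hrj (S j)); lia]. }
    assert (Hext : forall j, (1 <= j <= n - 1)%nat ->
              exists v, r j = sigma_fin k sigma (r (j - 1)%nat) ++ v).
    { intros j Hj. apply (proj1 (Hrj j Hj)). }
    destruct (erasing_chain_covers k sigma weps n r Hk Her Hopt Hdiv Hext Hlast y Hy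
                (n - 1) (le_n _)) as [C HC].
    replace (n - 1 - (n - 1))%nat with 0%nat in HC by lia.
    replace (S (n - 1)) with n in HC by lia.
    destruct Hr0 as [[v Hv] _].
    exists (val_inf (app_inf (r 0%nat) C)). split; [|exact HC].
    rewrite Hv, app_inf_app. apply cylinder_app_inf.
Qed.

(* Every nonempty open subset of I contains a cylinder: the cylinder of a
   long prefix of an expansion of one of its points. *)
Lemma open_contains_cylinder A a : open_in_I A -> A a ->
  exists w, forall x, cylinder w x -> A x.
Proof.
  intros [HAI HAo] Ha. destruct (HAo a Ha) as [eps [He HA]].
  destruct (binary_expansion a (HAI a Ha)) as [U HU].
  destruct (half_pow_small eps He) as [L HL].
  set (w := map U (seq 0 L)).
  assert (Haw : cylinder w a).
  { rewrite <- HU, <- (app_inf_prefix_tail U L). apply cylinder_app_inf. }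
  exists w. intros x Hx. apply HA; [apply Hx|].
  destruct (cylinder_affine w x Hx) as [t [Ht Hxt]].
  destruct (cylinder_affine w a Haw) as [s [Hs Has]].
  pose proof (half_pow_scaled_bounds (length w) t Ht).
  pose proof (half_pow_scaled_bounds (length w) s Hs).
  assert (Hwl : length w = L) by (unfold w; rewrite length_map, length_seq; reflexivity).
  rewrite Hwl in *. apply Rabs_def1; lra.
Qed.

Lemma iter_onto (f : R -> R) :
  (forall y, unit_interval y -> exists z, unit_interval z /\ f z = y) ->
  forall m y, unit_interval y -> exists z, unit_interval z /\ iter m f z = y.
Proof.
  intros Hf m. induction m as [|m IH]; intros y Hy; [exists y; split; auto|].
  destruct (IH y Hy) as [z' [Hz' Hit]]. destruct (Hf z' Hz') as [z [Hz Hfz]].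
  exists z. split; [exact Hz|]. rewrite iter_succ, Hfz. exact Hit.
Qed.

Lemma mixing_of_onto (f : R -> R) :
  (forall y, unit_interval y -> exists z, unit_interval z /\ f z = y) ->
  (forall A, open_in_I A -> (exists a, A a) ->
     exists h, forall y, unit_interval y -> exists x, A x /\ iter h f x = y) ->
  topologically_mixing f.
Proof.
  intros Hf Hopen A B HA [HBI _] Hne [b Hb]. destruct (Hopen A HA Hne) as [h Hh].
  exists h. intros n Hn.
  destruct (iter_onto f Hf (n - h)%nat b (HBI b Hb)) as [z [Hz Hzb]].
  destruct (Hh z Hz) as [x [Hx Hxz]]. exists x. split; [exact Hx|].
  replace n with ((n - h) + h)%nat by lia. rewrite iter_add, Hxz, Hzb. exact Hb.
Qed.

Theorem mainTheorem16 (k : nat) (sigma : list bool -> list bool) (weps : list bool) :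
  (2 <= k)%nat ->
  erasing k sigma weps ->
  strongly_erasing k sigma ->
  weps <> repeat true k ->
  optimal k sigma ->
  (forall w : list bool, exists h : nat,
     forall y, image_iter h (f_sigma k sigma weps) (cylinder w) y <-> unit_interval y) /\
  topologically_mixing (f_sigma k sigma weps).
Proof.
  intros Hk Her Hse _ Hopt.
  pose proof (image_cylinder_full k sigma weps Hk Her Hse Hopt) as Hcyl.
  split; [exact Hcyl|].
  apply mixing_of_onto; [exact (f_sigma_onto k sigma weps Hk Her Hopt)|].
  intros A HA [a Ha].
  destruct (open_contains_cylinder A a HA Ha) as [w Hw].
  destruct (Hcyl w) as [h Hh]. exists h. intros y Hy.
  destruct (proj2 (Hh y) Hy) as [x [Hx Hxy]]. exists x. split; [apply Hw, Hx|exact Hxy].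
Qed.
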